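(* Let $n=2e$ be even and let $\sigma$ be a permutation of $\mathbb{Z}_n$; its cycles $V_1,\dots,V_v$ are disjoint circularly ordered subsets covering $\mathbb{Z}_n$, and we say ''$ij\cdots$ is a subset'' when $\sigma(i)=j$. Then $V_1,\dots,V_v$ is a vertex set (i.e., $\sigma$ is induced by an orientable planar diagram of the $n$-gon all of whose vertices have degree at least $3$) if and only if the following three conditions hold: (1) each $V_k$ has at least three elements; (2) for no $i\in\mathbb{Z}_n$ is $i(i+1)\cdots$ a subset, i.e. $\sigma(i)\ne i+1$ for all $i$; (3) whenever $ij\cdots$ is a subset, $(j-1)(i+1)\cdots$ is also a subset, i.e. $\sigma(\sigma(i)-1)=i+1$ for all $i$.
   Context: The corners of an $n$-gon are labelled by $i\in\mathbb{Z}_n$ in circular order, and $\bar i$ denotes the edge from corner $i$ to corner $i+1$. An orientable planar diagram is a partition of the $n$ edges into $e=n/2$ unordered pairs $\{\bar i,\bar j\}$ (with $i\ne j$), each pair to be glued in the opposing (orientation-compatible) way; the glueing yields a single-tile tiling of a closed orientable surface. A pair $\{\bar i,\bar j\}$ makes corner $j+1$ adjacent (next in the circular order) to corner $i$ at a vertex, and corner $i+1$ adjacent to corner $j$ at a vertex. Thus, writing $\tau(i)=j$ when $\{\bar i,\bar j\}$ is a pair, the diagram induces the permutation $\sigma(i)=\tau(i)+1$ of $\mathbb{Z}_n$, whose cycles (circularly ordered subsets of corners) are the vertices of the tiling; the degree of a vertex is the size of its cycle. A vertex set is the collection of cycles induced in this way by a planar diagram all of whose vertices have degree at least $3$. *)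

From mathcomp Require Import all_boot all_fingroup.
Set Implicit Arguments. Unset Strict Implicit. Unset Printing Implicit Defensive.

(* Corners of the n-gon: 'I_n viewed as Z_n; i+1 is [ordS i], i-1 is [ord_pred i].
   Edge \bar i (corner i to corner i+1) is indexed by i. *)

(* An orientable planar diagram: a partition of the edges into unordered pairs
   {\bar i, \bar j} with i <> j, encoded by the pairing map tau (tau i = j). *)
Definition planar_diagram n (tau : 'I_n -> 'I_n) : Prop :=
  forall i, tau (tau i) = i /\ tau i != i.

Definition induced_by n (tau : 'I_n -> 'I_n) (s : {perm 'I_n}) : Prop :=
  forall i, s i = ordS (tau i).

Definition degree n (s : {perm 'I_n}) (i : 'I_n) : nat := #|porbit s i|.

Definition is_vertex_set n (s : {perm 'I_n}) : Prop :=
  exists tau, [/\ planar_diagram tau, induced_by tau s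
                & forall i, 3 <= degree s i].

From mathcomp Require Import all_boot all_fingroup.

Set Implicit Arguments. Unset Strict Implicit. Unset Printing Implicit Defensive.

(* Since sigma(i) = tau(i) + 1, the pairing tau is recovered from sigma as
   tau(i) = sigma(i) - 1. Conditions (2) and (3) then say exactly that this
   tau is fixed-point free and an involution, i.e. a planar diagram. *)

Section VertexSet.

Variable n : nat.
Implicit Types (s : {perm 'I_n}) (tau : 'I_n -> 'I_n).

Definition edge_pairing s (i : 'I_n) : 'I_n := ord_pred (s i).

Lemma induced_by_edge_pairing s : induced_by (edge_pairing s) s.
Proof. by move=> i; rewrite /edge_pairing ord_predK. Qed.

Lemma induced_by_uniq tau s : induced_by tau s -> tau =1 edge_pairing s.
Proof. by move=> tau_s i; rewrite /edge_pairing tau_s ordSK. Qed.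

Lemma planar_diagram_edge_pairing s :
  planar_diagram (edge_pairing s) <->
  (forall i, s i <> ordS i) /\ (forall i, s (ord_pred (s i)) = ordS i).
Proof.
rewrite /planar_diagram /edge_pairing; split.
- move=> pd; split=> i.
  + by case: (pd i) => _ /[swap] ->; rewrite ordSK eqxx.
  + by case: (pd i) => /(congr1 (@ordS n)); rewrite ord_predK.
- case=> nfix inv i; split; first by rewrite inv ordSK.
  by apply/eqP => /(congr1 (@ordS n)); rewrite ord_predK; apply: nfix.
Qed.

Lemma is_vertex_setE s :
  is_vertex_set s <->
  planar_diagram (edge_pairing s) /\ (forall i, 3 <= degree s i).
Proof.
split.
- case=> tau [pd tau_s deg3]; split=> // i.
  by rewrite -!(induced_by_uniq tau_s); apply: pd.
- by case=> pd deg3; exists (edge_pairing s); split=> //; apply: induced_by_edge_pairing.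
Qed.

End VertexSet.

Theorem proposition2p1 (e : nat) (s : {perm 'I_(e.*2)}) :
  is_vertex_set s <->
  [/\ (forall i, 3 <= degree s i),
      (forall i, s i <> ordS i)
    & (forall i, s (ord_pred (s i)) = ordS i)].
Proof.
split.
- by case/is_vertex_setE => /planar_diagram_edge_pairing [nfix inv] deg3.
- case=> deg3 nfix inv; apply/is_vertex_setE; split=> //.
  exact/planar_diagram_edge_pairing.
Qed.
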